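(* Let $P$ be a distribution on $\mathcal{X}$, $R>0$, $K>0$. Then \[ E_e(P,R,K)=\sup_{0\le\eta\le\rho\le 1}\big\{E_0(\rho,\eta,P)-\rho R-\eta K\big\}, \] where \[ E_e(P,R,K)=\min_{TV}\Big\{D(TV\|PW)+\big|A_{TV}-R+|B_{TV}-K|^{+}\big|^{+}\Big\},\qquad E_0(\rho,\eta,P)=-\log\sum_{y}\Big[\sum_x P(x)W^{\frac{1+\eta}{1+\rho}}(y|x)\Big]^{1+\rho}. \]
   Context: $\mathcal{X},\mathcal{Y}$ are finite alphabets and $W(y|x)$ is a conditional distribution on $\mathcal{Y}$ given $\mathcal{X}$. Logs are natural. $TV$ is a joint distribution on $\mathcal{Y}\times\mathcal{X}$ with $\mathcal{Y}$-marginal $T$ and conditional $V(x|y)$, minimized over all such distributions; $PW$ is $P(x)W(y|x)$; $D(TV\|PW)=\sum T(y)V(x|y)\log\frac{T(y)V(x|y)}{P(x)W(y|x)}$; $A_{TV}=\sum T(y)V(x|y)\log\frac{V(x|y)}{P(x)}$; $B_{TV}=\mathbb{E}_{TV}[-\log W(Y|X)]$; $|t|^{+}=\max\{0,t\}$. *)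

From HB Require Import structures.
From mathcomp Require Import all_boot all_order all_algebra.
From mathcomp Require Import all_classical all_reals all_analysis.
Set Implicit Arguments. Unset Strict Implicit. Unset Printing Implicit Defensive.
Import Order.TTheory GRing.Theory Num.Theory.
Local Open Scope ring_scope.

Section Defs.
Variables (R : realType) (X Y : finType).

Definition is_dist (T : finType) (P : T -> R) : Prop :=
  (forall x, 0 <= P x) /\ \sum_x P x = 1.

(* W(y|x) = W x y : a conditional distribution on Y given X *)
Definition is_channel (W : X -> Y -> R) : Prop := forall x, is_dist (W x).

(* TV as a joint distribution on Y x X : Q y x = T(y) V(x|y) *)
Definition is_joint (Q : Y -> X -> R) : Prop :=
  (forall y x, 0 <= Q y x) /\ \sum_y \sum_x Q y x = 1.

(* absolute continuity of TV w.r.t. PW; otherwise D(TV||PW) = +oo *)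
Definition abs_cont (P : X -> R) (W : X -> Y -> R) (Q : Y -> X -> R) : Prop :=
  forall y x, Q y x != 0 -> P x * W x y != 0.

Definition margT (Q : Y -> X -> R) (y : Y) : R := \sum_x Q y x.

Definition condV (Q : Y -> X -> R) (y : Y) (x : X) : R := Q y x / margT Q y.

(* terms with Q y x = 0 contribute 0 (since 0 * _ = 0): convention 0 log 0 = 0 *)
Definition divD (P : X -> R) (W : X -> Y -> R) (Q : Y -> X -> R) : R :=
  \sum_y \sum_x Q y x * ln (Q y x / (P x * W x y)).

Definition A_TV (P : X -> R) (Q : Y -> X -> R) : R :=
  \sum_y \sum_x Q y x * ln (condV Q y x / P x).

Definition B_TV (W : X -> Y -> R) (Q : Y -> X -> R) : R :=
  \sum_y \sum_x Q y x * (- ln (W x y)).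

Definition pos (t : R) : R := Num.max 0 t.

Definition Fe (P : X -> R) (W : X -> Y -> R) (Rt K : R) (Q : Y -> X -> R) : R :=
  divD P W Q + pos (A_TV P Q - Rt + pos (B_TV W Q - K)).

Definition E0 (P : X -> R) (W : X -> Y -> R) (rho eta : R) : R :=
  - ln (\sum_y (\sum_x P x * (W x y `^ ((1 + eta) / (1 + rho)))) `^ (1 + rho)).

End Defs.

From mathcomp Require Import all_boot all_order all_algebra.
From mathcomp Require Import all_classical all_reals all_analysis.
From mathcomp Require Import ring lra.
Import Order.TTheory GRing.Theory Num.Theory.
Import numFieldNormedType.Exports.
Local Open Scope classical_set_scope.
Local Open Scope ring_scope.

(* For a slope (rho, eta) with rho > -1 let Q be the joint distribution with
   V(x|y) proportional to P(x) W(y|x)^alpha, alpha = (1 + eta) / (1 + rho), and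
   T(y) proportional to (sum_x P(x) W(y|x)^alpha)^(1 + rho); its normaliser Z
   satisfies E0(rho, eta) = - ln Z. For every TV one has the identity
     D(TV || PW) + rho A_TV + eta B_TV + ln Z = D(TV || Q) + rho D(V || V_Q | T),
   so for rho >= 0 the Lagrangian on the left is at least E0, with equality at Q.
   As |a + |b|^+|^+ is the maximum of rho a + eta b over the triangle
   0 <= eta <= rho <= 1, this gives E_e >= E0 - rho R - eta K on the triangle.
   Conversely, let p0 maximise g = E0 - rho R - eta K over the compact triangle.
   The identity also shows that g is concave with gradient (A - R, B - K) of the
   tilted distribution; comparing g along segments out of p0 and using the
   continuity of that gradient, p0 maximises rho a + eta b on the triangle for
   the a, b of its own tilted distribution Q0, whence E_e(Q0) = g(p0). *)

Section RealFacts.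
Context {R : realType}.

Lemma sub_le_mul_ln_div (q r : R) : 0 < q -> 0 < r -> q - r <= q * ln (q / r).
Proof.
move=> q0 r0.
have ln_le : ln (r / q) <= r / q - 1.
  have := @le_ln1Dx R (r / q - 1); rewrite addrCA subrr addr0; apply.
  by rewrite ltrBrDl subrr divr_gt0.
have -> : ln (q / r) = - ln (r / q) by rewrite !ln_div ?posrE // opprB.
have qrq : q * (r / q) = r by rewrite mulrC mulfVK // gt_eqF.
have : q * ln (r / q) <= q * (r / q - 1) by rewrite ler_pM2l.
by rewrite mulrBr qrq mulr1 mulrN; lra.
Qed.

Lemma gibbs_inequality {I : finType} (q r : I -> R) :
  (forall i, 0 <= q i) -> (forall i, 0 <= r i) -> (forall i, q i != 0 -> 0 < r i) ->
  \sum_i q i - \sum_i r i <= \sum_i q i * ln (q i / r i).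
Proof.
move=> q_ge0 r_ge0 r_gt0; rewrite -sumrB; apply: ler_sum => i _.
have [->|qi0] := eqVneq (q i) 0; first by rewrite mul0r sub0r oppr_le0.
by apply: sub_le_mul_ln_div; [rewrite lt_neqAle eq_sym qi0 q_ge0 | exact: r_gt0].
Qed.

Lemma triangle_comb_le_pos (a b : R) {rho eta : R} : 0 <= eta -> eta <= rho -> rho <= 1 ->
  rho * a + eta * b <= pos (a + pos b).
Proof.
move=> eta0 eta_rho rho1; rewrite /pos.
have eb : eta * b <= rho * Num.max 0 b by case: (lerP 0 b) => b0; nra.
by case: (lerP 0 (a + Num.max 0 b)) => ab0; nra.
Qed.

Lemma pos_le_triangle_max {a b rho eta : R} :
  (forall r e, 0 <= e -> e <= r -> r <= 1 -> r * a + e * b <= rho * a + eta * b) ->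
  pos (a + pos b) <= rho * a + eta * b.
Proof.
move=> le_max; have := le_max 0 0 (lexx _) (lexx _) ler01.
have := le_max 1 0 (lexx _) ler01 (lexx _); have := le_max 1 1 ler01 (lexx _) (lexx _).
by rewrite /pos; case: (lerP 0 b) => b0; case: (lerP 0 (a + _)) => ab0; lra.
Qed.

Lemma le0_at0_from_right {f : R -> R} : {for 0, continuous f} ->
  (forall t, 0 < t -> t <= 1 -> f t <= 0) -> f 0 <= 0.
Proof.
move=> f_cont f_le0.
apply: (@closed_cvg _ _ _ _ f _ (@closed_le _ 0) _ _ (cvg_at_right_filter f_cont)).
near=> t; apply: f_le0; near: t; [exact: nbhs_right_gt | exact: nbhs_right_ltW ltr01].
Unshelve. all: by end_near.
Qed.

Lemma continuous_fsum (T : topologicalType) (I : finType) (f : I -> T -> R) (x : T) :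
  (forall i, {for x, continuous (f i)}) -> {for x, continuous (fun z => \sum_i f i z)}.
Proof. by move=> f_cont; apply: (cvg_big add_continuous) => // i _; exact: f_cont. Qed.

Lemma continuous_fst (p : R * R) : {for p, continuous (fun q : R * R => q.1)}.
Proof. by case: p => a b; exact: cvg_fst. Qed.

Lemma continuous_snd (p : R * R) : {for p, continuous (fun q : R * R => q.2)}.
Proof. by case: p => a b; exact: cvg_snd. Qed.

(* A slope is a pair [p = (rho, eta)]. *)
Definition slopes : set (R * R) := [set p | 0 <= p.2 /\ p.2 <= p.1 /\ p.1 <= 1].

Lemma slopes_fst_ge0 {p : R * R} : slopes p -> 0 <= p.1.
Proof. by case=> eta0 [eta_rho _]; exact: le_trans eta0 eta_rho. Qed.

Lemma slopes_1Dfst_gt0 {p : R * R} : slopes p -> 0 < 1 + p.1.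
Proof. by move=> /slopes_fst_ge0 rho0; rewrite ltr_pwDl. Qed.

Lemma slopes_convex {p0 p1 : R * R} t : slopes p0 -> slopes p1 -> 0 <= t -> t <= 1 ->
  slopes (p0.1 + t * (p1.1 - p0.1), p0.2 + t * (p1.2 - p0.2)).
Proof.
by move=> [e0 [er r1]] [e0' [er' r1']] t0 t1; rewrite /slopes /=; split; [|split]; nra.
Qed.

Lemma slopes_compact : compact slopes.
Proof.
have square_compact : compact (`[0, 1]%classic `*` `[0, 1]%classic : set (R * R)).
  exact: compact_setX (@segment_compact R 0 1) (@segment_compact R 0 1).
have -> : slopes = (fun q : R * R => q.2) @^-1` [set x | 0 <= x] `&`
    ((fun q : R * R => q.1 - q.2) @^-1` [set x | 0 <= x] `&`
     (fun q : R * R => q.1) @^-1` [set x | x <= 1]).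
  by apply/funext => q /=; rewrite /slopes /= subr_ge0.
apply: (subclosed_compact _ square_compact).
  apply: closedI; last apply: closedI; apply: (proj1 (continuous_closedP _)).
  - exact: continuous_snd.
  - exact: closed_ge.
  - by move=> q; apply: cvgB; [exact: continuous_fst | exact: continuous_snd].
  - exact: closed_ge.
  - exact: continuous_fst.
  - exact: closed_le.
move=> [r e] /= [e0 [er r1]]; split; rewrite /= in_itv /=; apply/andP; split; lra.
Qed.

End RealFacts.

Section Tilted.
Context {R : realType} {X Y : finType} {W : X -> Y -> R} {P : X -> R}.
Hypotheses (W_channel : is_channel W) (P_dist : is_dist P).

Lemma P_ge0 x : 0 <= P x. Proof. by case: P_dist. Qed.
Lemma W_ge0 x y : 0 <= W x y. Proof. by case: (W_channel x). Qed.

Definition supp (y : Y) (x : X) := P x * W x y != 0.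
Definition ysupp (y : Y) := [exists x, supp y x].

Lemma supp_P_gt0 {y x} : supp y x -> 0 < P x.
Proof. by rewrite lt_neqAle P_ge0 andbT eq_sym; apply: contraNneq => ->; rewrite mul0r. Qed.

Lemma supp_W_gt0 {y x} : supp y x -> 0 < W x y.
Proof. by rewrite lt_neqAle W_ge0 andbT eq_sym; apply: contraNneq => ->; rewrite mulr0. Qed.

Lemma supp_ysupp {y x} : supp y x -> ysupp y.
Proof. by move=> sxy; apply/existsP; exists x. Qed.

Lemma exists_ysupp : exists y, ysupp y.
Proof.
apply/existsP; apply: contraT; rewrite negb_exists => /forallP none.
have : \sum_x P x * \sum_y W x y = 0.
  under eq_bigr => x _ do rewrite mulr_sumr.
  rewrite exchange_big; apply: big1 => y _; apply: big1 => x _; apply/eqP.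
  by move: (none y); apply: contraNT; exact: supp_ysupp.
under eq_bigr => x _ do rewrite (proj2 (W_channel x)) mulr1.
by rewrite (proj2 P_dist) => /eqP; rewrite oner_eq0.
Qed.

Definition alpha (p : R * R) := (1 + p.2) / (1 + p.1).

(* [tiltw] is [P W^alpha], written with [expR] on the support (where [W > 0]) so
   that it is continuous in the slope; [tiltH] is [tiltG^(1 + rho)]. *)
Definition tiltw p y x := if supp y x then P x * expR (alpha p * ln (W x y)) else 0.
Definition tiltG p y := \sum_x tiltw p y x.
Definition tiltH p y := if ysupp y then expR ((1 + p.1) * ln (tiltG p y)) else 0.
Definition tiltZ p := \sum_y tiltH p y.
Definition tiltV p y x := tiltw p y x / tiltG p y.
Definition tiltQ p y x := if supp y x then tiltH p y / tiltZ p * tiltV p y x else 0.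

Lemma tiltw_ge0 p y x : 0 <= tiltw p y x.
Proof.
by rewrite /tiltw; case: ifP => // /supp_P_gt0 Px0; rewrite mulr_ge0 ?expR_ge0 ?ltW.
Qed.

Lemma tiltw_gt0 p {y x} : supp y x -> 0 < tiltw p y x.
Proof.
by move=> sxy; rewrite /tiltw sxy; apply: mulr_gt0; [exact: supp_P_gt0 sxy | exact: expR_gt0].
Qed.

Lemma tiltw_out p {y} x : ~~ ysupp y -> tiltw p y x = 0.
Proof. by move=> ny; rewrite /tiltw ifN //; apply: contra ny; exact: supp_ysupp. Qed.

Lemma tiltG_gt0 p {y} : ysupp y -> 0 < tiltG p y.
Proof.
case/existsP => x sxy; apply: (lt_le_trans (tiltw_gt0 p sxy)).
by rewrite /tiltG (bigD1 x) //= lerDl sumr_ge0 // => i _; exact: tiltw_ge0.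
Qed.

Lemma tiltH_ge0 p y : 0 <= tiltH p y.
Proof. by rewrite /tiltH; case: ifP => _ //; exact: expR_ge0. Qed.

Lemma tiltH_gt0 p {y} : ysupp y -> 0 < tiltH p y.
Proof. by rewrite /tiltH => ->; exact: expR_gt0. Qed.

Lemma tiltZ_gt0 p : 0 < tiltZ p.
Proof.
have [y sy] := exists_ysupp; apply: (lt_le_trans (tiltH_gt0 p sy)).
by rewrite /tiltZ (bigD1 y) //= lerDl sumr_ge0 // => i _; exact: tiltH_ge0.
Qed.

Lemma tiltV_ge0 p y x : 0 <= tiltV p y x.
Proof.
rewrite /tiltV divr_ge0 ?tiltw_ge0 //.
by rewrite sumr_ge0 // => i _; exact: tiltw_ge0.
Qed.

Lemma tiltV_gt0 p {y x} : supp y x -> 0 < tiltV p y x.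
Proof. by move=> sxy; rewrite divr_gt0 ?tiltw_gt0 ?tiltG_gt0 ?(supp_ysupp sxy). Qed.

Lemma sum_tiltV p {y} : ysupp y -> \sum_x tiltV p y x = 1.
Proof. by move=> sy; rewrite /tiltV -mulr_suml divff // gt_eqF ?tiltG_gt0. Qed.

Lemma tiltQ_ge0 p y x : 0 <= tiltQ p y x.
Proof.
rewrite /tiltQ; case: ifP => // _.
by rewrite mulr_ge0 ?tiltV_ge0 // divr_ge0 ?tiltH_ge0 // ltW ?tiltZ_gt0.
Qed.

Lemma tiltQ_gt0 p {y x} : supp y x -> 0 < tiltQ p y x.
Proof.
move=> sxy; rewrite /tiltQ sxy mulr_gt0 ?tiltV_gt0 //.
by rewrite divr_gt0 ?tiltZ_gt0 ?tiltH_gt0 ?(supp_ysupp sxy).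
Qed.

Lemma margT_tiltQ p y : margT (tiltQ p) y = tiltH p y / tiltZ p.
Proof.
have [sy|ny] := boolP (ysupp y).
  rewrite /margT -[RHS]mulr1 -(sum_tiltV p sy) mulr_sumr; apply: eq_bigr => x _.
  by rewrite /tiltQ; case: ifPn => // nxy; rewrite /tiltV /tiltw (negbTE nxy) mul0r mulr0.
rewrite /tiltH (negbTE ny) mul0r; apply: big1 => x _.
by rewrite /tiltQ ifN //; apply: contra ny; exact: supp_ysupp.
Qed.

Lemma tiltQ_joint p : is_joint (tiltQ p).
Proof.
split=> [y x|]; first exact: tiltQ_ge0.
under eq_bigr => y _ do rewrite -/(margT (tiltQ p) y) margT_tiltQ.
by rewrite -mulr_suml divff // gt_eqF ?tiltZ_gt0.
Qed.

Lemma tiltQ_abs_cont p : abs_cont P W (tiltQ p).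
Proof. by move=> y x; rewrite /tiltQ; case: ifP => // _; rewrite eqxx. Qed.

Lemma condV_tiltQ p {y x} : supp y x -> condV (tiltQ p) y x = tiltV p y x.
Proof.
move=> sxy; rewrite /condV margT_tiltQ /tiltQ sxy mulrC mulKf // gt_eqF //.
by rewrite divr_gt0 ?tiltZ_gt0 ?tiltH_gt0 ?(supp_ysupp sxy).
Qed.

Lemma E0_tiltZ rho eta : 0 < 1 + rho -> 0 < 1 + eta ->
  E0 P W rho eta = - ln (tiltZ (rho, eta)).
Proof.
move=> rho1 eta1; rewrite /E0 /tiltZ; congr (- ln _); apply: eq_bigr => y _.
have -> : \sum_x P x * W x y `^ ((1 + eta) / (1 + rho)) = tiltG (rho, eta) y.
  apply: eq_bigr => x _; rewrite /tiltw; case: ifPn => [sxy|nxy].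
    by rewrite /powR gt_eqF ?(supp_W_gt0 sxy).
  move/negPn: nxy; rewrite mulf_eq0 => /orP[/eqP->|/eqP->]; first by rewrite mul0r.
  by rewrite powR0 ?mulr0 // mulf_neq0 ?invr_eq0 // gt_eqF.
rewrite /tiltH; case: ifPn => [sy|ny]; first by rewrite /powR gt_eqF ?tiltG_gt0.
rewrite (_ : tiltG _ y = 0) ?powR0 ?gt_eqF //.
by apply: big1 => x _; exact: tiltw_out.
Qed.

Definition lagrangian (Q : Y -> X -> R) (p : R * R) :=
  divD P W Q + p.1 * A_TV P Q + p.2 * B_TV W Q.

Lemma joint_gt0 {Q : Y -> X -> R} {y x} : is_joint Q -> Q y x != 0 -> 0 < Q y x.
Proof. by case=> Q_ge0 _ Qyx; rewrite lt_neqAle eq_sym Qyx Q_ge0. Qed.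

Lemma margT_gt0 {Q : Y -> X -> R} {y x} : is_joint Q -> Q y x != 0 -> 0 < margT Q y.
Proof.
move=> Qj Qyx; apply: (lt_le_trans (joint_gt0 Qj Qyx)).
by rewrite /margT (bigD1 x) //= lerDl sumr_ge0 // => i _; case: Qj.
Qed.

Lemma lagrangian_lnZ {Q : Y -> X -> R} {p} : is_joint Q -> abs_cont P W Q -> 0 < 1 + p.1 ->
  lagrangian Q p + ln (tiltZ p) =
  \sum_y \sum_x Q y x * ln (Q y x / tiltQ p y x) +
  p.1 * \sum_y \sum_x Q y x * ln (condV Q y x / tiltV p y x).
Proof.
move=> Qj Qac rho1.
have -> : ln (tiltZ p) = \sum_y \sum_x Q y x * ln (tiltZ p).
  by rewrite -[LHS]mul1r -(proj2 Qj) !mulr_suml; apply: eq_bigr => y _; rewrite mulr_suml.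
rewrite /lagrangian /divD /A_TV /B_TV !mulr_sumr -!big_split /=; apply: eq_bigr => y _.
rewrite !mulr_sumr -!big_split /=; apply: eq_bigr => x _.
have [->|Qyx] := eqVneq (Q y x) 0; first by rewrite !(mul0r, mulr0, addr0).
have sxy : supp y x := Qac y x Qyx.
have Q0 := joint_gt0 Qj Qyx; have T0 := margT_gt0 Qj Qyx.
have V0 : 0 < condV Q y x by rewrite divr_gt0.
have [P0 W0] := (supp_P_gt0 sxy, supp_W_gt0 sxy).
have [w0 G0] := (tiltw_gt0 p sxy, tiltG_gt0 p (supp_ysupp sxy)).
have [H0 Z0] := (tiltH_gt0 p (supp_ysupp sxy), tiltZ_gt0 p).
have [HZ0 Vt0] := (divr_gt0 H0 Z0, tiltV_gt0 p sxy).
rewrite /tiltQ sxy (ln_div Q0 (mulr_gt0 HZ0 Vt0)) (lnM HZ0 Vt0) (ln_div H0 Z0).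
rewrite (ln_div V0 Vt0) (ln_div V0 P0) (ln_div Q0 (mulr_gt0 P0 W0)) (lnM P0 W0).
rewrite /tiltV (ln_div w0 G0) /tiltw sxy (lnM P0 (expR_gt0 _)) expRK.
rewrite /tiltH (supp_ysupp sxy) expRK.
have : alpha p * (1 + p.1) = 1 + p.2 by rewrite /alpha mulfVK // gt_eqF.
move: (alpha p) => a a_rho.
have -> : p.2 = a * (1 + p.1) - 1 by rewrite a_rho addrC addKr.
ring.
Qed.

Lemma relative_entropy_ge0 (Q : Y -> X -> R) p : is_joint Q -> abs_cont P W Q ->
  0 <= \sum_y \sum_x Q y x * ln (Q y x / tiltQ p y x).
Proof.
move=> Qj Qac; apply: (@le_trans _ _ (\sum_y (\sum_x Q y x - \sum_x tiltQ p y x))).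
  by rewrite sumrB (proj2 Qj) (proj2 (tiltQ_joint p)) subrr.
apply: ler_sum => y _; apply: gibbs_inequality => [x|x|x Qyx].
- by case: Qj.
- exact: tiltQ_ge0.
- exact/tiltQ_gt0/Qac.
Qed.

Lemma cond_relative_entropy_ge0 (Q : Y -> X -> R) p y : is_joint Q -> abs_cont P W Q ->
  0 <= \sum_x Q y x * ln (condV Q y x / tiltV p y x).
Proof.
move=> Qj Qac.
have [/existsP[x Qyx]|/existsPn Q0] := boolP [exists x, Q y x != 0]; last first.
  by rewrite big1 // => x _; move/negPn/eqP: (Q0 x) => ->; rewrite mul0r.
have Tgt0 := margT_gt0 Qj Qyx.
have QTV x' : Q y x' = margT Q y * condV Q y x' by rewrite /condV mulrC mulfVK // gt_eqF.
under eq_bigr => x' _ do rewrite QTV -mulrA.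
rewrite -mulr_sumr; apply: mulr_ge0; first exact: ltW.
apply: le_trans _ (gibbs_inequality (condV Q y) (tiltV p y) _ _ _).
- rewrite sum_tiltV ?(supp_ysupp (Qac y x Qyx)) // /condV -mulr_suml -/(margT Q y).
  by rewrite divff ?subrr // gt_eqF.
- by move=> x'; apply: divr_ge0 (ltW Tgt0); case: Qj.
- exact: tiltV_ge0.
- move=> x' /negPf Vx'; apply/tiltV_gt0/Qac; move: Vx'; rewrite /condV.
  by apply: contraFN => /eqP ->; rewrite mul0r.
Qed.

Lemma lagrangian_ge {Q : Y -> X -> R} {p} : is_joint Q -> abs_cont P W Q -> 0 <= p.1 ->
  - ln (tiltZ p) <= lagrangian Q p.
Proof.
move=> Qj Qac rho0; have rho1 : 0 < 1 + p.1 by rewrite ltr_pwDl.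
rewrite -subr_ge0 opprK (lagrangian_lnZ Qj Qac rho1) addr_ge0 ?mulr_ge0 //.
- exact: relative_entropy_ge0.
- by apply: sumr_ge0 => y _; exact: cond_relative_entropy_ge0.
Qed.

Lemma lagrangian_tiltQ p : 0 < 1 + p.1 -> lagrangian (tiltQ p) p = - ln (tiltZ p).
Proof.
move=> rho1; apply/eqP.
rewrite -subr_eq0 opprK (lagrangian_lnZ (tiltQ_joint p) (tiltQ_abs_cont p) rho1).
rewrite !big1 ?mulr0 ?addr0 // => y _; apply: big1 => x _.
all: have [sxy|nxy] := boolP (supp y x); last by rewrite /tiltQ ifN // mul0r.
- by rewrite condV_tiltQ // divff ?ln1 ?mulr0 // gt_eqF ?tiltV_gt0.
- by rewrite divff ?ln1 ?mulr0 // gt_eqF ?tiltQ_gt0.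
Qed.

Lemma Fe_ge_lagrangian (Q : Y -> X -> R) Rt K {p} : slopes p ->
  lagrangian Q p - p.1 * Rt - p.2 * K <= Fe P W Rt K Q.
Proof.
case=> eta0 [eta_rho rho1]; rewrite /Fe /lagrangian.
by have := triangle_comb_le_pos (A_TV P Q - Rt) (B_TV W Q - K) eta0 eta_rho rho1; lra.
Qed.

Section Continuity.
Variable p : R * R.
Hypothesis rho1 : 0 < 1 + p.1.

Lemma continuous_alpha : {for p, continuous alpha}.
Proof.
apply: cvgM; first by apply: cvgD; [exact: cvg_cst | exact: continuous_snd].
by apply: cvgV; [rewrite gt_eqF | apply: cvgD; [exact: cvg_cst | exact: continuous_fst]].
Qed.

Lemma continuous_tiltw y x : {for p, continuous (fun q => tiltw q y x)}.
Proof.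
rewrite /tiltw; case: (boolP (supp y x)) => _; last exact: cvg_cst.
apply: cvgM; first exact: cvg_cst.
apply: (continuous_comp (f := fun q => alpha q * ln (W x y))); last exact: continuous_expR.
by apply: cvgM; [exact: continuous_alpha | exact: cvg_cst].
Qed.

Lemma continuous_tiltG y : {for p, continuous (fun q => tiltG q y)}.
Proof. by apply: continuous_fsum => x; exact: continuous_tiltw. Qed.

Lemma continuous_tiltH y : {for p, continuous (fun q => tiltH q y)}.
Proof.
rewrite /tiltH; case: (boolP (ysupp y)) => sy; last exact: cvg_cst.
apply: (@continuous_comp _ _ _ (fun q : R * R => (1 + q.1) * ln (tiltG q y)) expR).
  2: exact: continuous_expR.
apply: cvgM; first by apply: cvgD; [exact: cvg_cst | exact: continuous_fst].
apply: (continuous_comp (f := fun q => tiltG q y)); first exact: continuous_tiltG.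
exact/continuous_ln/tiltG_gt0.
Qed.

Lemma continuous_tiltZ : {for p, continuous tiltZ}.
Proof. by apply: continuous_fsum => y; exact: continuous_tiltH. Qed.

Lemma continuous_tiltV y x : {for p, continuous (fun q => tiltV q y x)}.
Proof.
have [sy|ny] := boolP (ysupp y).
  apply: cvgM; first exact: continuous_tiltw.
  by apply: cvgV; [rewrite gt_eqF ?tiltG_gt0 | exact: continuous_tiltG].
have -> : (fun q => tiltV q y x) = fun=> 0.
  by apply/funext => q; rewrite /tiltV tiltw_out ?mul0r.
exact: cvg_cst.
Qed.

Lemma continuous_tiltQ y x : {for p, continuous (fun q => tiltQ q y x)}.
Proof.
rewrite /tiltQ; case: (boolP (supp y x)) => _; last exact: cvg_cst.
apply: cvgM; last exact: continuous_tiltV.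
apply: cvgM; first exact: continuous_tiltH.
by apply: cvgV; [rewrite gt_eqF ?tiltZ_gt0 | exact: continuous_tiltZ].
Qed.

Lemma A_TV_tiltQ q : A_TV P (tiltQ q) =
  \sum_y \sum_x (if supp y x then tiltQ q y x * ln (tiltV q y x / P x) else 0).
Proof.
apply: eq_bigr => y _; apply: eq_bigr => x _.
by case: ifPn => [sxy|nxy]; [rewrite condV_tiltQ | rewrite /tiltQ ifN // mul0r].
Qed.

Lemma continuous_A_TV_tiltQ : {for p, continuous (fun q => A_TV P (tiltQ q))}.
Proof.
change (A_TV P (tiltQ q) @[q --> p] --> A_TV P (tiltQ p)).
rewrite A_TV_tiltQ; under eq_cvg do rewrite A_TV_tiltQ.
apply: continuous_fsum => y; apply: continuous_fsum => x.
case: (boolP (supp y x)) => sxy; last exact: cvg_cst.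
apply: cvgM; first exact: continuous_tiltQ.
apply: (continuous_comp (f := fun q => tiltV q y x / P x)).
  by apply: cvgM; [exact: continuous_tiltV | exact: cvg_cst].
by apply/continuous_ln/divr_gt0; [exact: tiltV_gt0 | exact: supp_P_gt0 sxy].
Qed.

Lemma continuous_B_TV_tiltQ : {for p, continuous (fun q => B_TV W (tiltQ q))}.
Proof.
apply: continuous_fsum => y; apply: continuous_fsum => x.
by apply: cvgM; [exact: continuous_tiltQ | exact: cvg_cst].
Qed.

End Continuity.

Section Duality.
Variables Rt K : R.

Definition gain (p : R * R) := - ln (tiltZ p) - p.1 * Rt - p.2 * K.

Lemma continuous_gain p : 0 < 1 + p.1 -> {for p, continuous gain}.
Proof.
move=> rho1; apply: cvgB; last by apply: cvgM; [exact: continuous_snd | exact: cvg_cst].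
apply: cvgB; last by apply: cvgM; [exact: continuous_fst | exact: cvg_cst].
apply: cvgN; apply: (continuous_comp (f := tiltZ)); first exact: continuous_tiltZ.
exact/continuous_ln/tiltZ_gt0.
Qed.

Lemma gain_max_exists : exists2 p0, slopes p0 & forall p, slopes p -> gain p <= gain p0.
Proof.
have slopes0 : @slopes R !=set0 by exists (0, 0); rewrite /slopes /= lexx ler01.
have gain_cont : {within slopes, continuous gain}.
  by apply: continuous_in_subspaceT => q /set_mem /slopes_1Dfst_gt0; exact: continuous_gain.
have [p0 /set_mem p0_slopes p0_max] := compact_EVT_max slopes0 slopes_compact gain_cont.
by exists p0 => // p p_slopes; apply: p0_max; exact: mem_set.
Qed.

(* [gain] is concave, and [(A - Rt, B - K)] of [tiltQ q] is its gradient at [q]. *)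
Lemma gain_le_linearization {p0 q} : 0 <= p0.1 -> 0 < 1 + q.1 ->
  gain p0 <= gain q + (p0.1 - q.1) * (A_TV P (tiltQ q) - Rt)
                    + (p0.2 - q.2) * (B_TV W (tiltQ q) - K).
Proof.
move=> rho0 rho1.
have -> : gain q = lagrangian (tiltQ q) q - q.1 * Rt - q.2 * K.
  by rewrite /gain lagrangian_tiltQ.
have := lagrangian_ge (tiltQ_joint q) (tiltQ_abs_cont q) rho0; rewrite /gain /lagrangian.
move: (divD P W _) (A_TV P _) (B_TV W _) (ln (tiltZ p0)) => D A B lnZ lnZ_le.
have -> : D + q.1 * A + q.2 * B - q.1 * Rt - q.2 * K + (p0.1 - q.1) * (A - Rt)
    + (p0.2 - q.2) * (B - K) = D + p0.1 * A + p0.2 * B - p0.1 * Rt - p0.2 * K by ring.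
by rewrite !lerD2r.
Qed.

(* On the segment [seg] from [p0] to [(rho, eta)], [gain_le_linearization] at [seg t]
   and maximality of [p0] give [t * slope t <= 0]; continuity at [t = 0] concludes. *)
Lemma gain_max_first_order {p0} : slopes p0 -> (forall p, slopes p -> gain p <= gain p0) ->
  let a := A_TV P (tiltQ p0) - Rt in let b := B_TV W (tiltQ p0) - K in
  forall rho eta, 0 <= eta -> eta <= rho -> rho <= 1 ->
  rho * a + eta * b <= p0.1 * a + p0.2 * b.
Proof.
move=> p0_slopes p0_max a b rho eta eta0 eta_rho rho1.
have p1_slopes : slopes (rho, eta) by [].
pose seg t := (p0.1 + t * (rho - p0.1), p0.2 + t * (eta - p0.2)).
pose slope t := (rho - p0.1) * (A_TV P (tiltQ (seg t)) - Rt)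
              + (eta - p0.2) * (B_TV W (tiltQ (seg t)) - K).
have seg0 : seg 0 = p0 by rewrite /seg !mul0r !addr0 -surjective_pairing.
have slope_le0 t : 0 < t -> t <= 1 -> slope t <= 0.
  move=> t0 t1; have seg_slopes := slopes_convex t p0_slopes p1_slopes (ltW t0) t1.
  have := gain_le_linearization (slopes_fst_ge0 p0_slopes) (slopes_1Dfst_gt0 seg_slopes).
  have := p0_max _ seg_slopes; rewrite -(pmulr_rle0 _ t0) /slope /seg /=.
  move: (gain _) (gain _) (A_TV _ _) (B_TV _ _) => g0 g1 A B g1_le g0_le.
  by clear -g1_le g0_le; lra.
have slope_cont : {for 0, continuous slope}.
  have rho1' := slopes_1Dfst_gt0 p0_slopes.
  have seg_cvg : seg t @[t --> (0 : R)] --> seg 0.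
    have lin_cvg c d : c + t * d @[t --> (0 : R)] --> c + 0 * d.
      by apply: cvgD; [exact: cvg_cst | apply: cvgM; [exact: cvg_id | exact: cvg_cst]].
    exact: cvg_pair (lin_cvg _ _) (lin_cvg _ _).
  rewrite seg0 in seg_cvg.
  apply: cvgD; apply: cvgM (cvg_cst _) _; apply: cvgB (cvg_cst _); rewrite seg0.
  - exact: cvg_comp _ _ seg_cvg (continuous_A_TV_tiltQ p0 rho1').
  - exact: cvg_comp _ _ seg_cvg (continuous_B_TV_tiltQ p0 rho1').
have := le0_at0_from_right slope_cont slope_le0; rewrite /slope seg0 -/a -/b.
by move: a b => a' b'; lra.
Qed.

Lemma Fe_tiltQ_gain {p0} : slopes p0 -> (forall p, slopes p -> gain p <= gain p0) ->
  Fe P W Rt K (tiltQ p0) = gain p0.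
Proof.
move=> p0_slopes p0_max; apply/eqP; rewrite eq_le; apply/andP; split.
- have gain_p0 : gain p0 = lagrangian (tiltQ p0) p0 - p0.1 * Rt - p0.2 * K.
    by rewrite /gain lagrangian_tiltQ ?slopes_1Dfst_gt0.
  have := pos_le_triangle_max (gain_max_first_order p0_slopes p0_max).
  rewrite gain_p0 /Fe /lagrangian.
  by move: (divD _ _ _) (A_TV _ _) (B_TV _ _) => D A B; lra.
- have := Fe_ge_lagrangian (tiltQ p0) Rt K p0_slopes.
  by rewrite /gain lagrangian_tiltQ ?slopes_1Dfst_gt0.
Qed.

End Duality.
End Tilted.

Theorem lemma7 (R : realType) (X Y : finType) (W : X -> Y -> R) (P : X -> R)
    (Rt K : R) :
  is_channel W -> is_dist P -> 0 < Rt -> 0 < K ->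
  exists Q0 : Y -> X -> R,
    [/\ is_joint Q0, abs_cont P W Q0,
      (forall Q, is_joint Q -> abs_cont P W Q -> Fe P W Rt K Q0 <= Fe P W Rt K Q),
      (forall rho eta, 0 <= eta -> eta <= rho -> rho <= 1 ->
         E0 P W rho eta - rho * Rt - eta * K <= Fe P W Rt K Q0) &
      (forall eps, 0 < eps -> exists rho eta,
         [/\ 0 <= eta, eta <= rho, rho <= 1 &
             Fe P W Rt K Q0 - eps < E0 P W rho eta - rho * Rt - eta * K])].
Proof.
move=> W_channel P_dist _ _.
have [p0 p0_slopes p0_max] := gain_max_exists W_channel P_dist Rt K.
have Fe_gain := Fe_tiltQ_gain W_channel P_dist Rt K p0_slopes p0_max.
have E0_gain rho eta : slopes (rho, eta) ->
    E0 P W rho eta - rho * Rt - eta * K = gain (W := W) (P := P) Rt K (rho, eta).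
  move=> slopes_re; have [eta0 _] := slopes_re; have eta1 : 0 < 1 + eta by rewrite ltr_pwDl.
  by rewrite (E0_tiltZ W_channel P_dist rho eta (slopes_1Dfst_gt0 slopes_re) eta1).
exists (tiltQ (W := W) (P := P) p0); split.
- exact: tiltQ_joint.
- exact: tiltQ_abs_cont.
- move=> Q Q_joint Q_ac; rewrite Fe_gain.
  apply: le_trans _ (Fe_ge_lagrangian Q Rt K p0_slopes); rewrite /gain !lerD2r.
  exact: lagrangian_ge Q_joint Q_ac (slopes_fst_ge0 p0_slopes).
- move=> rho eta eta0 eta_rho rho1; rewrite Fe_gain E0_gain //; exact: p0_max.
- move=> eps eps0; exists p0.1, p0.2; case: p0_slopes => eta0 [eta_rho rho1].
  by rewrite E0_gain -?surjective_pairing // Fe_gain ltrBlDr ltrDl.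
Qed.
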